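(* Let $K=(V,E)$ be a finite graph with at least $s\geqslant1$ connected components. Let $\mathscr{C}$ be a color set of size at least $|V|$ that contains at least $|V|-s+1$ distinct colors. Then there exists a coloring of $K$ by $\mathscr{C}$.
   Context: A color set is a finite multiset (elements, i.e. colors, may appear with multiplicities). A coloring of a graph $K=(V,E)$ by a color set $\mathscr{C}$ is a map $\phi\colon V\to\mathscr{C}$, into the elements of the multiset counted with multiplicity, with two properties. First, each element of $\mathscr{C}$ is used at most once, i.e. $|\phi^{-1}(c)|\leqslant1$ for every element $c$ of $\mathscr{C}$. Second, adjacent vertices receive different colors (as values): $\phi(u)\neq\phi(v)$ whenever $(u,v)\in E$. *)

From mathcomp Require Import all_boot.
Set Implicit Arguments. Unset Strict Implicit. Unset Printing Implicit Defensive.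

Definition simple_graph (V : finType) (e : rel V) : Prop :=
  symmetric e /\ irreflexive e.

Definition num_components (V : finType) (e : rel V) : nat := n_comp e V.

(* A color set (multiset) is a sequence cs : seq Col; its elements (with
   multiplicity) are the positions 'I_(size cs); the color value of position
   i is tnth (in_tuple cs) i. A coloring maps vertices injectively to
   positions (each element used at most once), with adjacent vertices
   receiving different color values. *)
Definition color_of (Col : eqType) (cs : seq Col) (i : 'I_(size cs)) : Col :=
  tnth (in_tuple cs) i.

Definition is_coloring (V : finType) (e : rel V) (Col : eqType) (cs : seq Col)
    (phi : V -> 'I_(size cs)) : Prop :=
  injective phi /\ forall u v, e u v -> color_of (phi u) != color_of (phi v).

From mathcomp Require Import all_boot zify.
Set Implicit Arguments. Unset Strict Implicit. Unset Printing Implicit Defensive.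

(* We prove a stronger statement in which the graph is replaced by the
   disjoint union of cliques on its connected components: every component
   must be rainbow (its vertices receive pairwise distinct colours).

   Abstractly, vertices V are partitioned into classes by cls : V -> K and
   slots I (elements of the colour multiset) are coloured by col : I -> J.
   For A : {set V} and P : {set I}, call (A, P) admissible when
   |A| <= |P| and |A| <= |col(P)| + |cls(A)| - 1.  By induction on |A| + |P|,
   every admissible pair has a rainbow assignment A -> P (rainbow_exists):
   either a surplus slot with a repeated colour is discarded, or a vertex v
   and a slot i are removed together, where v is alone in its class or i is
   the only slot of its colour, so that v |-> i extends any rainbow
   assignment of the rest.

   The theorem follows with cls the component root and col the first
   position of a colour in the list, after checking that these images
   count at least the components and the distinct colours. *)

Section Twins.
Variables (T R : finType) (f : T -> R).

Definition twin (A : {set T}) (x : T) : bool :=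
  [exists y in A, (y != x) && (f y == f x)].

Lemma card_imsetD1 (A : {set T}) x : #|f @: A| <= #|f @: (A :\ x)|.+1.
Proof.
have sub_A : A \subset x |: (A :\ x).
  by apply/subsetP => y yA; rewrite !inE yA andbT; case: eqP.
apply: leq_trans (subset_leq_card (imsetS f sub_A)) _.
by rewrite imsetU1 cardsU1 -add1n leq_add2r leq_b1.
Qed.

Lemma card_imsetD1_twin (A : {set T}) x :
  twin A x -> #|f @: (A :\ x)| = #|f @: A|.
Proof.
case/exists_inP=> y yA /andP[yx /eqP fyx].
suff -> : f @: (A :\ x) = f @: A by [].
apply/eqP; rewrite eqEsubset imsetS ?subD1set //=.
apply/subsetP=> _ /imsetP[z zA ->].
have [-> | zx] := eqVneq z x; first by rewrite -fyx imset_f // !inE yx.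
by rewrite imset_f // !inE zx.
Qed.

Lemma card_imset_twins (A : {set T}) :
  {in A, forall x, twin A x} -> 2 * #|f @: A| <= #|A|.
Proof.
move=> all_twin; rewrite -[#|A|]sum1_card (partition_big_imset f) /= mulnC -sum_nat_const.
apply: leq_sum => _ /imsetP[x xA ->].
have /exists_inP[y yA /andP[yx fyx]] := all_twin x xA.
rewrite (bigD1 x) /=; last by rewrite xA eqxx.
by rewrite (bigD1 y) /= ?yA ?fyx ?yx // addnA leq_addr.
Qed.

Lemma no_twin_inj (A : {set T}) :
  {in A, forall x, ~~ twin A x} -> {in A &, injective f}.
Proof.
move=> no_twin x y xA yA fxy; apply/eqP; apply: contraR (no_twin y yA) => xy.
by apply/exists_inP; exists x; rewrite ?xA // xy fxy eqxx.
Qed.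

End Twins.

Section RainbowAssignment.
Variables (V I K J : finType) (cls : V -> K) (col : I -> J).

Definition rainbow (A : {set V}) (P : {set I}) (phi : V -> I) : Prop :=
  [/\ {in A &, injective phi}, {in A, forall v, phi v \in P} &
      forall u w, u \in A -> w \in A -> u != w -> cls u = cls w ->
        col (phi u) != col (phi w)].

(* The counting hypothesis of the theorem, relative to A and P: enough slots,
   and at least |A| - k + 1 colours where k is the number of classes met by A. *)
Definition admissible (A : {set V}) (P : {set I}) : Prop :=
  #|A| <= #|P| /\ #|A| <= #|col @: P| + #|cls @: A| - 1.

Lemma rainbow_set0 (P : {set I}) (i0 : I) : rainbow set0 P (fun=> i0).
Proof. by split=> [u|u|u]; rewrite inE. Qed.

Lemma rainbow_subset (A : {set V}) (P Q : {set I}) phi :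
  P \subset Q -> rainbow A P phi -> rainbow A Q phi.
Proof. by move=> /subsetP sPQ [inj inP rb]; split=> // v /inP /sPQ. Qed.

Lemma rainbow_extend (A : {set V}) (P : {set I}) v i phi :
  i \in P -> ~~ twin cls A v || ~~ twin col P i ->
  rainbow (A :\ v) (P :\ i) phi ->
  rainbow A P (fun u => if u == v then i else phi u).
Proof.
move=> iP alone [inj inP rb].
have phi_neq_i w : w \in A :\ v -> phi w != i.
  by move/inP; rewrite !inE => /andP[].
have new_colour w : w \in A :\ v -> cls w = cls v -> col i != col (phi w).
  case/setD1P=> wv wA cls_wv; case/orP: alone => /exists_inPn no_twin.
    by move: (no_twin w wA); rewrite wv cls_wv eqxx.
  have phiwP : phi w \in P.
    by have := inP w; rewrite !inE wv wA => /(_ isT) /andP[].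
  by rewrite eq_sym; move: (no_twin _ phiwP); rewrite phi_neq_i // !inE wv.
split.
- move=> u w uA wA /=.
  have [-> | uv] := eqVneq u v; have [-> | wv] := eqVneq w v => //.
  + by move=> /esym/eqP; rewrite (negbTE (phi_neq_i w _)) // !inE wv.
  + by move=> /eqP; rewrite (negbTE (phi_neq_i u _)) // !inE uv.
  + by apply: inj; rewrite !inE ?uv ?wv.
- move=> u uA /=; have [// | uv] := eqVneq u v.
  by have := inP u; rewrite !inE uv uA => /(_ isT) /andP[].
- move=> u w uA wA uw cls_uw /=.
  have [eu | uv] := eqVneq u v; have [ew | wv] := eqVneq w v.
  + by rewrite eu ew eqxx in uw.
  + by apply: new_colour; rewrite ?inE ?wv // -cls_uw eu.
  + by rewrite eq_sym; apply: new_colour; rewrite ?inE ?uv // cls_uw ew.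
  + by apply: rb; rewrite ?inE ?uv ?wv.
Qed.

Lemma admissible_drop_twin (A : {set V}) (P : {set I}) i :
  i \in P -> twin col P i -> #|A| < #|P| -> admissible A P -> admissible A (P :\ i).
Proof.
move=> iP i_twin ltAP [_ budget]; rewrite /admissible card_imsetD1_twin //.
by rewrite (cardsD1 i P) iP in ltAP; split.
Qed.

(* If every
   vertex and every slot had a twin, both counts would be at most |A|/2,
   contradicting the budget. *)
Lemma removable_pair (A : {set V}) (P : {set I}) :
  A != set0 -> admissible A P ->
  #|P| <= #|A| \/ {in P, forall i, ~~ twin col P i} ->
  exists v i, [/\ v \in A, i \in P, ~~ twin cls A v || ~~ twin col P i
                  & admissible (A :\ v) (P :\ i)].
Proof.
move=> /set0Pn[v0 v0A] [leAP budget] no_surplus.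
have A_pos : 0 < #|A| by apply/card_gt0P; exists v0.
have pairD1 v i : v \in A -> i \in P ->
    #|A| - 1 <= #|col @: (P :\ i)| + #|cls @: (A :\ v)| - 1 ->
    admissible (A :\ v) (P :\ i).
  move=> vA iP; rewrite /admissible; move: leAP.
  by rewrite (cardsD1 v A) (cardsD1 i P) vA iP; lia.
have [/exists_inP[i iP i_twin] | /exists_inPn no_twinP] :=
    boolP [exists i in P, twin col P i].
  have lePA : #|P| <= #|A|.
    by case: no_surplus => // /(_ i iP); rewrite i_twin.
  have [/exists_inP[v vA v_alone] | /exists_inPn all_twinA] :=
    boolP [exists v in A, ~~ twin cls A v].
    exists v, i; split; rewrite ?v_alone //; apply: pairD1 => //.
    by move: (card_imsetD1 cls A v) (card_imsetD1_twin i_twin); lia.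
  have [/exists_inP[j jP j_alone] | /exists_inPn all_twinP] :=
    boolP [exists j in P, ~~ twin col P j].
    exists v0, j; split; rewrite ?j_alone ?orbT //; apply: pairD1 => //.
    have v0_twin : twin cls A v0 by rewrite -[twin _ _ _]negbK all_twinA.
    by move: (card_imsetD1 col P j) (card_imsetD1_twin v0_twin); lia.
  have /card_imset_twins twinsA : {in A, forall v, twin cls A v}.
    by move=> v /all_twinA; rewrite negbK.
  have /card_imset_twins twinsP : {in P, forall j, twin col P j}.
    by move=> j /all_twinP; rewrite negbK.
  by move: twinsA twinsP; lia.
have [i iP] : exists i, i \in P by apply/card_gt0P; apply: leq_trans leAP.
exists v0, i; split; rewrite ?no_twinP ?orbT //; apply: pairD1 => //.
have -> : #|col @: (P :\ i)| = #|P :\ i|.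
  by apply: card_in_imset; apply: sub_in2 (no_twin_inj no_twinP) => j /setD1P[].
have cls_pos : 0 < #|A :\ v0| -> 0 < #|cls @: (A :\ v0)|.
  by rewrite !card_gt0 imset_eq0.
by move: leAP cls_pos; rewrite [#|A|](cardsD1 v0 A) [#|P|](cardsD1 i P) v0A iP; lia.
Qed.

Lemma rainbow_exists (i0 : I) (A : {set V}) (P : {set I}) :
  admissible A P -> exists phi, rainbow A P phi.
Proof.
have [n] := ubnP (#|A| + #|P|); elim: n A P => // n IH A P size_lt adm.
have [-> | A_nz] := eqVneq A set0; first by exists (fun=> i0); exact: rainbow_set0.
have by_pair : #|P| <= #|A| \/ {in P, forall i, ~~ twin col P i} ->
    exists phi, rainbow A P phi.
  move/(removable_pair A_nz adm) => [v [i [vA iP alone adm']]].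
  have [|phi rb] := IH (A :\ v) (P :\ i) _ adm'.
    by move: size_lt; rewrite (cardsD1 v A) (cardsD1 i P) vA iP; lia.
  by exists (fun u => if u == v then i else phi u); apply: rainbow_extend.
have [ltAP | lePA] := ltnP #|A| #|P|; last by apply: by_pair; left.
have [/exists_inP[i iP i_twin] | /exists_inPn no_twinP] :=
    boolP [exists i in P, twin col P i].
  have [|phi rb] := IH A (P :\ i) _ (admissible_drop_twin iP i_twin ltAP adm).
    by move: size_lt; rewrite (cardsD1 i P) iP; lia.
  by exists phi; apply: rainbow_subset rb; apply: subD1set.
by apply: by_pair; right.
Qed.

End RainbowAssignment.

Section ColorKeys.
Variables (Col : eqType) (cs : seq Col).

Lemma index_color_lt (i : 'I_(size cs)) : index (color_of i) cs < size cs.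
Proof. by rewrite index_mem /color_of mem_tnth. Qed.

(* The key of a slot is the first slot carrying the same colour; keys give a
   finite type of colours, so colour counts become cardinals of images. *)
Definition color_key (i : 'I_(size cs)) : 'I_(size cs) := Ordinal (index_color_lt i).

Lemma color_of_key i : color_of (color_key i) = color_of i.
Proof.
by rewrite /color_of (tnth_nth (color_of i)) /= nth_index // /color_of mem_tnth.
Qed.

Lemma color_keyE i j : (color_key i == color_key j) = (color_of i == color_of j).
Proof.
apply/eqP/eqP => [key_eq | col_eq]; last by apply: val_inj; rewrite /= col_eq.
by rewrite -color_of_key key_eq color_of_key.
Qed.

Lemma undup_le_keys : size (undup cs) <= #|color_key @: [set: 'I_(size cs)]|.
Proof.
rewrite cardE -(size_map (@color_of _ cs)); apply: uniq_leq_size; first exact: undup_uniq.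
move=> x; rewrite mem_undup => /(tnthP (in_tuple cs))[i ->].
by rewrite -[tnth _ i]/(color_of i) -color_of_key map_f // mem_enum imset_f.
Qed.

End ColorKeys.

Lemma num_components_le_roots (V : finType) (e : rel V) :
  num_components e <= #|root e @: [set: V]|.
Proof.
apply: subset_leq_card; apply/subsetP => r; rewrite !inE => /andP[/eqP r_root _].
by rewrite -r_root imset_f.
Qed.

Lemma adjacent_same_root (V : finType) (e : rel V) u v :
  symmetric e -> e u v -> root e u = root e v.
Proof.
move=> e_sym euv; apply/eqP; rewrite (root_connect (sym_connect_sym e_sym)).
exact: connect1.
Qed.

Theorem lemma4p7 (V : finType) (e : rel V) (Col : eqType) (cs : seq Col) (s : nat) :
  simple_graph e ->
  1 <= s ->
  s <= num_components e ->
  #|V| <= size cs ->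
  #|V| - s + 1 <= size (undup cs) ->
  exists phi : V -> 'I_(size cs), is_coloring e phi.
Proof.
move=> [e_sym e_irr] s_pos s_le size_ok distinct_ok.
have [V_empty | V_pos] := posnP #|V|.
  have no_vertex (v : V) : False by move/card0_eq/(_ v): V_empty.
  by exists (fun v => match no_vertex v with end); split=> [u | u]; case: (no_vertex u).
pose i0 : 'I_(size cs) := Ordinal (leq_trans V_pos size_ok).
have adm : admissible (root e) (@color_key _ cs) [set: V] [set: 'I_(size cs)].
  split; first by rewrite !cardsT card_ord.
  rewrite cardsT; apply: (@leq_trans (size (undup cs) + num_components e - 1)); first lia.
  by rewrite leq_sub2r // leq_add ?undup_le_keys ?num_components_le_roots.
have [phi [phi_inj _ phi_rainbow]] := rainbow_exists i0 adm.
exists phi; split=> [u w | u w euw]; first by apply: phi_inj; rewrite inE.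
rewrite -color_keyE; apply: phi_rainbow; rewrite ?inE //.
  by apply: contraTneq euw => ->; rewrite e_irr.
exact: adjacent_same_root.
Qed.
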